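(* Assume (A2) and (A3), and work in the dynamic Lanczos setting. Then for every $j=1,\dots,m$, $$A_1Q_j=Q_jT_j+\beta_{j+1}q_{j+1}e_j^\top+\delta Q'_j,$$ where $\delta Q'_j=[\delta q'_1,\dots,\delta q'_j]$ satisfies $\|\delta q'_i\|\le L_{gyy}\tilde\varepsilon_j$ for $i=1,\dots,j$.
   Context: Let $f,g:\mathbb{R}^{d_x}\times\mathbb{R}^{d_y}\to\mathbb{R}$ be twice continuously differentiable; norms are Euclidean/spectral and $\|(x,y)\|:=(\|x\|^2+\|y\|^2)^{1/2}$. (A2): $\nabla_xg,\nabla_yg$ are $L_{gx}$-, $L_{gy}$-Lipschitz and $\nabla^2_{xy}g,\nabla^2_{yy}g$ are $L_{gxy}$-, $L_{gyy}$-Lipschitz. (A3): $g(x,\cdot)$ is $\mu_g$-strongly convex for every $x$, $\mu_g>0$. Dynamic Lanczos setting: fix $x_1,\dots,x_m\in\mathbb{R}^{d_x}$, $y_1,\dots,y_m\in\mathbb{R}^{d_y}$, $A_i:=\nabla^2_{yy}g(x_i,y_i)$, $\bar b\ne0$. Set $q_0=0$, $\beta_1=0$, $q_1=\bar b/\|\bar b\|$, and $u_i=A_iq_i-\beta_iq_{i-1}$, $\alpha_i=q_i^\top u_i$, $\omega_i=u_i-\alpha_iq_i$, $\beta_{i+1}=\|\omega_i\|$, $q_{i+1}=\omega_i/\beta_{i+1}$ (assume $\beta_{i+1}\ne0$). $Q_j:=[q_1,\dots,q_j]$; $T_j$ is the $j\times j$ symmetric tridiagonal matrix with diagonal $\alpha_1,\dots,\alpha_j$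 and off-diagonal $\beta_2,\dots,\beta_j$; $e_j$ is the $j$-th standard basis vector. $\tilde\varepsilon_j:=\max_{1\le s,t\le j}\big(\|x_s-x_t\|+\|y_s-y_t\|\big)$. *)

From HB Require Import structures.
From mathcomp Require Import all_boot all_order all_algebra.
From mathcomp Require Import all_classical all_reals all_analysis.
Set Implicit Arguments. Unset Strict Implicit. Unset Printing Implicit Defensive.
Import Order.TTheory GRing.Theory Num.Theory.
Import numFieldNormedType.Exports.
Local Open Scope classical_set_scope.
Local Open Scope ring_scope.

Section Defs.
Variable R : realType.

Definition enorm (d : nat) (v : 'cV[R]_d) : R := Num.sqrt (\sum_i v i 0 ^+ 2).

Definition pnorm (dx dy : nat) (x : 'cV[R]_dx) (y : 'cV[R]_dy) : R :=
  Num.sqrt (enorm x ^+ 2 + enorm y ^+ 2).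

Definition specnorm (m n : nat) (A : 'M[R]_(m, n)) : R :=
  sup [set enorm (A *m v) | v in [set v : 'cV[R]_n | enorm v <= 1]].

Definition ebase (d : nat) (k : 'I_d) : 'cV[R]_d := delta_mx k 0.

Variables dx dy : nat.
Implicit Types (g : 'cV[R]_dx -> 'cV[R]_dy -> R) (x : 'cV[R]_dx) (y : 'cV[R]_dy).

Definition unc g : 'cV[R]_dx * 'cV[R]_dy -> R := fun z => g z.1 z.2.

Definition dirx (k : 'I_dx) : 'cV[R]_dx * 'cV[R]_dy := (ebase k, 0).
Definition diry (k : 'I_dy) : 'cV[R]_dx * 'cV[R]_dy := (0, ebase k).

Definition gradx g x y : 'cV[R]_dx := \col_k 'D_(dirx k) (unc g) (x, y).
Definition grady g x y : 'cV[R]_dy := \col_k 'D_(diry k) (unc g) (x, y).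
Definition hessxy g x y : 'M[R]_(dx, dy) :=
  \matrix_(k, l) 'D_(dirx k) ('D_(diry l) (unc g)) (x, y).
Definition hessyy g x y : 'M[R]_(dy, dy) :=
  \matrix_(k, l) 'D_(diry k) ('D_(diry l) (unc g)) (x, y).

Definition C2 g : Prop :=
  (forall z, differentiable (unc g) z) /\
  (forall u z, differentiable ('D_u (unc g)) z) /\
  (forall u v, continuous ('D_v ('D_u (unc g)))).

Definition assumption_A2 g (Lgx Lgy Lgxy Lgyy : R) : Prop :=
  (forall x y x' y', enorm (gradx g x y - gradx g x' y') <= Lgx * pnorm (x - x') (y - y')) /\
  (forall x y x' y', enorm (grady g x y - grady g x' y') <= Lgy * pnorm (x - x') (y - y')) /\
  (forall x y x' y', specnorm (hessxy g x y - hessxy g x' y') <= Lgxy * pnorm (x - x') (y - y')) /\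
  (forall x y x' y', specnorm (hessyy g x y - hessyy g x' y') <= Lgyy * pnorm (x - x') (y - y')).

Definition assumption_A3 g (mu : R) : Prop :=
  0 < mu /\
  forall x y y' (t : R), 0 <= t <= 1 ->
    g x (t *: y + (1 - t) *: y') <=
      t * g x y + (1 - t) * g x y' - mu / 2 * t * (1 - t) * enorm (y - y') ^+ 2.
End Defs.

Section Lanczos.
Variables (R : realType) (d : nat) (A : nat -> 'M[R]_d) (b : 'cV[R]_d).

Definition lz_u (Ai : 'M[R]_d) (qp qc : 'cV[R]_d) (bc : R) : 'cV[R]_d := Ai *m qc - bc *: qp.
Definition lz_alpha (qc u : 'cV[R]_d) : R := (qc^T *m u) 0 0.
Definition lz_omega (qc u : 'cV[R]_d) : 'cV[R]_d := u - lz_alpha qc u *: qc.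

(* lz_state n = (q_n, q_{n+1}, beta_{n+1}), with q_0 = 0, beta_1 = 0,
   q_1 = b/||b||, and A_i used at index i *)
Fixpoint lz_state (n : nat) : 'cV[R]_d * 'cV[R]_d * R :=
  match n with
  | 0 => (0, (enorm b)^-1 *: b, 0)
  | n'.+1 =>
      let: (qp, qc, bc) := lz_state n' in
      let u := lz_u (A n'.+1) qp qc bc in
      let om := lz_omega qc u in
      let bn := enorm om in
      (qc, bn^-1 *: om, bn)
  end.

(* q_i (i >= 0), beta_i (i >= 1), alpha_i (i >= 1) *)
Definition lq (i : nat) : 'cV[R]_d := if i is i'.+1 then (lz_state i').1.2 else 0.
Definition lbeta (i : nat) : R := (lz_state i.-1).2.
Definition lalpha (i : nat) : R := lz_alpha (lq i) (lz_u (A i) (lq i.-1) (lq i) (lbeta i)).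

Definition lQ (j : nat) : 'M[R]_(d, j) := \matrix_(r, c) lq c.+1 r 0.
Definition lT (j : nat) : 'M[R]_j :=
  \matrix_(k, l)
    if k == l then lalpha k.+1
    else if (l == k.+1 :> nat) || (k == l.+1 :> nat) then lbeta (maxn k l).+1
    else 0.
End Lanczos.

Definition erowT (R : realType) (j : nat) : 'rV[R]_j := \row_(c < j) ((c == j.-1 :> nat)%:R).

Definition eps_tilde (R : realType) (dx dy : nat) (x : nat -> 'cV[R]_dx) (y : nat -> 'cV[R]_dy)
  (j : nat) : R :=
  \big[Num.max/0]_(1 <= s < j.+1) \big[Num.max/0]_(1 <= t < j.+1)
     (enorm (x s - x t) + enorm (y s - y t)).

From HB Require Import structures.
From mathcomp Require Import all_boot all_order all_algebra.
From mathcomp Require Import all_classical all_reals all_analysis.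
From mathcomp Require Import ring zify.
Import Order.TTheory GRing.Theory Num.Theory.
Local Open Scope ring_scope.

(* Unrolling the three-term recurrence [A_i q_i = beta_i q_(i-1) + alpha_i q_i
   + beta_(i+1) q_(i+1)] shows that column [i] of [A_1 Q_j - Q_j T_j - beta_(j+1)
   q_(j+1) e_j^T] is exactly [(A_1 - A_i) q_i]. Since [q_i] is a unit vector, its norm
   is at most the spectral norm of [A_1 - A_i], which the Lipschitz continuity of the
   Hessian bounds by [L_gyy ||(x_1 - x_i, y_1 - y_i)|| <= L_gyy eps_j]. *)

Section EuclideanNorm.
Context {R : realType}.

Lemma enorm_ge0 {d} (v : 'cV[R]_d) : 0 <= enorm v.
Proof. exact: sqrtr_ge0. Qed.

Lemma enorm0 d : enorm (0 : 'cV[R]_d) = 0.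
Proof. by rewrite /enorm big1 ?sqrtr0 // => i _; rewrite mxE expr0n. Qed.

Lemma enorm_eq0 {d} (v : 'cV[R]_d) : (enorm v == 0) = (v == 0).
Proof.
apply/idP/eqP => [|->]; last by rewrite enorm0.
rewrite sqrtr_eq0 => sum_le0.
have sum_eq0 : \sum_i v i 0 ^+ 2 = 0.
  by apply/eqP; rewrite eq_le sum_le0 sumr_ge0 // => i _; apply: sqr_ge0.
apply/matrixP => i z; rewrite (ord1 z) mxE.
have /eqP := psumr_eq0P (fun i _ => sqr_ge0 (v i 0)) sum_eq0 (i := i) isT.
by rewrite sqrf_eq0 => /eqP.
Qed.

Lemma enormZ {d} (c : R) (v : 'cV[R]_d) : enorm (c *: v) = `|c| * enorm v.
Proof.
rewrite /enorm -sqrtr_sqr -sqrtrM ?sqr_ge0 // mulr_sumr; congr Num.sqrt.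
by apply: eq_bigr => i _; rewrite mxE exprMn.
Qed.

Lemma coord_le_enorm {d} (v : 'cV[R]_d) k : `|v k 0| <= enorm v.
Proof.
rewrite /enorm -sqrtr_sqr ler_wsqrtr // (bigD1 k) //= lerDl.
by apply: sumr_ge0 => i _; apply: sqr_ge0.
Qed.

Lemma enorm_le_coordwise {d} (v : 'cV[R]_d) (u : 'I_d -> R) :
  (forall k, `|v k 0| <= u k) -> enorm v <= Num.sqrt (\sum_k u k ^+ 2).
Proof.
move=> le_vu; rewrite ler_wsqrtr // ler_sum // => k _.
by rewrite -real_normK ?num_real // lerXn2r ?nnegrE // (le_trans _ (le_vu k)).
Qed.

Lemma enorm_le_pnorml {dx dy} (a : 'cV[R]_dx) (b : 'cV[R]_dy) : enorm a <= pnorm a b.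
Proof.
rewrite /pnorm -[leLHS]ger0_norm ?enorm_ge0 // -sqrtr_sqr ler_wsqrtr //.
by rewrite lerDl sqr_ge0.
Qed.

Lemma enorm_le_pnormr {dx dy} (a : 'cV[R]_dx) (b : 'cV[R]_dy) : enorm b <= pnorm a b.
Proof.
rewrite /pnorm -[leLHS]ger0_norm ?enorm_ge0 // -sqrtr_sqr ler_wsqrtr //.
by rewrite lerDr sqr_ge0.
Qed.

Lemma pnorm_le_enormD {dx dy} (a : 'cV[R]_dx) (b : 'cV[R]_dy) :
  pnorm a b <= enorm a + enorm b.
Proof.
have a_ge0 := enorm_ge0 a; have b_ge0 := enorm_ge0 b.
rewrite /pnorm -[leRHS]ger0_norm ?addr_ge0 // -sqrtr_sqr ler_wsqrtr // sqrrD.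
by rewrite -addrA lerD2l lerDr mulrn_wge0 // mulr_ge0.
Qed.

Lemma enorm_mulmx_le_specnorm {m n} (M : 'M[R]_(m, n)) (v : 'cV[R]_n) :
  enorm v <= 1 -> enorm (M *m v) <= specnorm M.
Proof.
move=> v_le1; apply: sup_upper_bound; last by exists v.
split; first by exists (enorm (M *m v)), v.
exists (Num.sqrt (\sum_k (\sum_l `|M k l|) ^+ 2)) => _ [w /= w_le1 <-].
apply: enorm_le_coordwise => k; rewrite mxE.
apply: (le_trans (ler_norm_sum _ _ _)); apply: ler_sum => l _.
rewrite normrM -[leRHS]mulr1 ler_wpM2l //.
exact: le_trans (coord_le_enorm w l) w_le1.
Qed.

Lemma specnorm_ge0 {m n} (M : 'M[R]_(m, n)) : 0 <= specnorm M.
Proof.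
rewrite -(enorm0 m) -(mulmx0 _ M).
by apply: enorm_mulmx_le_specnorm; rewrite enorm0 ler01.
Qed.

End EuclideanNorm.

Lemma sum_ord_indicator {R : pzSemiRingType} j a (F : nat -> R) :
  \sum_(k < j) F k * (k == a :> nat)%:R = if (a < j)%N then F a else 0.
Proof.
under eq_bigr => k _ do rewrite mulr_natr mulrb.
by rewrite -big_mkcond big_ord1_eq.
Qed.

Section Lanczos.
Variables (R : realType) (d : nat) (A : nat -> 'M[R]_d) (b : 'cV[R]_d).

Local Notation q := (lq A b).
Local Notation beta := (lbeta A b).
Local Notation alpha := (lalpha A b).

Definition lomega i := lz_omega (q i) (lz_u (A i) (q i.-1) (q i) (beta i)).

Lemma lz_state_fst n : (lz_state A b n).1.1 = q n.
Proof. by case: n => //= n; rewrite /lq; case: (lz_state A b n) => [[]]. Qed.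

Lemma lq1 : q 1 = (enorm b)^-1 *: b.
Proof. by []. Qed.

Lemma lbeta_succ n : beta n.+2 = enorm (lomega n.+1).
Proof.
by rewrite /lomega /lbeta /= -lz_state_fst /lq /=; case: (lz_state A b n) => [[]].
Qed.

Lemma lq_succ n : q n.+2 = (beta n.+2)^-1 *: lomega n.+1.
Proof.
by rewrite /lomega /lbeta /= -lz_state_fst /lq /=; case: (lz_state A b n) => [[]].
Qed.

Lemma lanczos_recurrence n : beta n.+2 != 0 ->
  A n.+1 *m q n.+1 = beta n.+1 *: q n + alpha n.+1 *: q n.+1 + beta n.+2 *: q n.+2.
Proof.
move=> beta_neq0; rewrite lq_succ scalerA mulfV // scale1r.
by rewrite /lomega /lz_omega /lz_u /lalpha /= -[_ - _ - _]addrA -opprD subrKC.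
Qed.

Lemma enorm_lq n : b != 0 -> ((0 < n)%N -> beta n.+1 != 0) -> enorm (q n.+1) = 1.
Proof.
move=> b_neq0; case: n => [|n] beta_neq0.
  by rewrite lq1 enormZ normfV ger0_norm ?enorm_ge0 // mulVf // enorm_eq0.
rewrite lq_succ enormZ -lbeta_succ normfV ger0_norm ?mulVf ?beta_neq0 //.
by rewrite lbeta_succ enorm_ge0.
Qed.

Arguments lq : simpl never.

Lemma lT_entry j (k c : 'I_j) : lT A b j k c =
  alpha c.+1 * (k == c :> nat)%:R + beta c.+1 * (k.+1 == c)%:R
  + beta c.+2 * (k == c.+1 :> nat)%:R.
Proof.
rewrite mxE -val_eqE /=; case: k c => [k ?] [c ?] /=.
have [->|_] := eqVneq k c.
  by rewrite (gtn_eqF (ltnSn c)) (ltn_eqF (ltnSn c)) /=; ring.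
have [->|_] := eqVneq c k.+1.
  by rewrite (maxn_idPr (leqnSn k)) (ltn_eqF (ltnW _)) //=; ring.
have [->|_] := eqVneq k c.+1; first by rewrite (maxn_idPl (leqnSn c)) /=; ring.
by rewrite /=; ring.
Qed.

Lemma col_lQ j (c : 'I_j) : col c (lQ A b j) = q c.+1.
Proof. by apply/matrixP => r z; rewrite (ord1 z) !mxE. Qed.

Lemma col_mulmx_lQ j (M : 'M[R]_d) (c : 'I_j) : col c (M *m lQ A b j) = M *m q c.+1.
Proof. by rewrite colE -mulmxA -colE col_lQ. Qed.

Lemma col_lQ_mul_lT j (c : 'I_j) : col c (lQ A b j *m lT A b j) =
  beta c.+1 *: q c + alpha c.+1 *: q c.+1 + ((c.+1 < j)%:R * beta c.+2) *: q c.+2.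
Proof.
apply/matrixP => r z; rewrite (ord1 z) !mxE.
under eq_bigr => k _ do rewrite mxE lT_entry !mulrDr !mulrA.
rewrite !big_split (sum_ord_indicator _ _ (fun k => q k.+1 r 0 * alpha c.+1)).
rewrite (sum_ord_indicator _ _ (fun k => q k.+1 r 0 * beta c.+2)) ltn_ord.
have -> : \sum_(k < j) q k.+1 r 0 * beta c.+1 * (k.+1 == c)%:R = q c r 0 * beta c.+1.
  case: c => [[|c] lt_cj].
    by rewrite big1 ?mxE ?mul0r // => k _; rewrite mulr0.
  under eq_bigr => k _ do rewrite eqSS.
  by rewrite (sum_ord_indicator _ _ (fun k => q k.+1 r 0 * beta c.+2)) ltnW.
case: ifP => _; rewrite ?mxE /=; ring.
Qed.

Lemma col_mul_erowT j (v : 'cV[R]_d) (c : 'I_j) :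
  col c (v *m erowT R j) = (c == j.-1 :> nat)%:R *: v.
Proof. by apply/matrixP => r z; rewrite (ord1 z) !mxE big_ord1 !mxE mulrC. Qed.

Lemma col_lanczos_residual (M : 'M[R]_d) j (i : 'I_j) : beta i.+2 != 0 ->
  col i (M *m lQ A b j - lQ A b j *m lT A b j - beta j.+1 *: (q j.+1 *m erowT R j)) =
  (M - A i.+1) *m q i.+1.
Proof.
move=> beta_neq0; have lt_ij := ltn_ord i.
rewrite colE !mulmxBl scalemxAl -!colE col_mulmx_lQ col_lQ_mul_lT col_mul_erowT.
rewrite (lanczos_recurrence i beta_neq0).
have [lt_i1j|ge_i1j] := ltnP i.+1 j.
  by rewrite (_ : i == j.-1 :> nat = false) /=; [rewrite scale0r subr0 mul1r | lia].
rewrite (_ : i == j.-1 :> nat = true) /=; last by apply/eqP; lia.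
rewrite (_ : j.+1 = i.+2) /=; last by lia.
by rewrite mul0r scale0r addr0 scale1r [in RHS]opprD addrA.
Qed.

End Lanczos.

Section EpsTilde.
Context {R : realType} {dx dy : nat} (x : nat -> 'cV[R]_dx) (y : nat -> 'cV[R]_dy).

Lemma pnorm_le_eps_tilde j s t : (1 <= s <= j)%N -> (1 <= t <= j)%N ->
  pnorm (x s - x t) (y s - y t) <= eps_tilde x y j.
Proof.
move=> s_in t_in; apply: le_trans (pnorm_le_enormD _ _) _.
have s_mem : s \in index_iota 1 j.+1 by rewrite mem_index_iota ltnS.
have t_mem : t \in index_iota 1 j.+1 by rewrite mem_index_iota ltnS.
by apply: (bigmax_sup_seq _ s) => //; apply: (le_bigmax_seq _ t).
Qed.

(* With a negative constant the Lipschitz bound forces all the points to coincide,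
   so [eps_tilde] vanishes and the bound still holds. *)
Lemma lipschitz_le_eps_tilde {p n} (F : 'cV[R]_dx -> 'cV[R]_dy -> 'M[R]_(p, n)) L :
  (forall x y x' y', specnorm (F x y - F x' y') <= L * pnorm (x - x') (y - y')) ->
  forall j s t, (1 <= s <= j)%N -> (1 <= t <= j)%N ->
  specnorm (F (x s) (y s) - F (x t) (y t)) <= L * eps_tilde x y j.
Proof.
move=> F_lip j s t s_in t_in; apply: le_trans (F_lip _ _ _ _) _.
have [L_ge0|L_lt0] := leP 0 L; first by rewrite ler_wpM2l ?pnorm_le_eps_tilde.
have pnorm_le0 s' t' : pnorm (x s' - x t') (y s' - y t') <= 0.
  by rewrite -(nmulr_rge0 _ L_lt0) (le_trans (specnorm_ge0 _) (F_lip _ _ _ _)).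
have eps_le0 : eps_tilde x y j <= 0.
  apply: bigmax_le => // s' _; apply: bigmax_le => // t' _.
  rewrite -[0]addr0 lerD //.
  - exact: le_trans (enorm_le_pnorml _ _) (pnorm_le0 s' t').
  - exact: le_trans (enorm_le_pnormr _ _) (pnorm_le0 s' t').
apply: ler_wnM2l; first exact: ltW.
apply: le_trans eps_le0 _.
exact: le_trans (enorm_ge0 _) (enorm_le_pnorml _ _).
Qed.

End EpsTilde.

Theorem lemmaG1 (R : realType) (dx dy m : nat)
  (g : 'cV[R]_dx -> 'cV[R]_dy -> R) (Lgx Lgy Lgxy Lgyy mu : R)
  (x : nat -> 'cV[R]_dx) (y : nat -> 'cV[R]_dy) (b : 'cV[R]_dy) :
  C2 g ->
  assumption_A2 g Lgx Lgy Lgxy Lgyy ->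
  assumption_A3 g mu ->
  b != 0 ->
  (forall i, (1 <= i <= m)%N ->
     lbeta (fun k => hessyy g (x k) (y k)) b i.+1 != 0) ->
  let A := fun k => hessyy g (x k) (y k) in
  forall j : nat, (1 <= j <= m)%N ->
    exists dQ : 'M[R]_(dy, j),
      A 1%N *m lQ A b j =
        lQ A b j *m lT A b j + lbeta A b j.+1 *: (lq A b j.+1 *m erowT R j) + dQ
      /\ forall i : 'I_j, enorm (col i dQ) <= Lgyy * eps_tilde x y j.
Proof.
move=> _ [_ [_ [_ hess_lip]]] _ b_neq0 beta_neq0 A j /andP[j_ge1 j_le_m].
exists (A 1%N *m lQ A b j - lQ A b j *m lT A b j
        - lbeta A b j.+1 *: (lq A b j.+1 *m erowT R j)).
split; first by rewrite -[_ - _ - _]addrA -opprD subrKC.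
move=> i; have lt_ij := ltn_ord i.
rewrite col_lanczos_residual; last by apply: beta_neq0; lia.
have q_le1 : enorm (lq A b i.+1) <= 1.
  by rewrite enorm_lq // => i_gt0; apply: beta_neq0; lia.
apply: le_trans (enorm_mulmx_le_specnorm _ _ q_le1) _.
by apply: (lipschitz_le_eps_tilde x y _ _ hess_lip j 1 i.+1); lia.
Qed.
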